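(* Let $L$ be a Lie algebra over a field $F$ generated by elements $a_1,\dots,a_m$ such that every element of the Lie set $S\langle a_1,\dots,a_m\rangle$ is ad-nilpotent. Let $I$ be an ideal of $L$ of finite codimension. Then $I$ is finitely generated as a Lie algebra.
   Context: An element $a\in L$ is ad-nilpotent if $\operatorname{ad}(a):x\mapsto[x,a]$ is a nilpotent operator on $L$. $S\langle a_1,\dots,a_m\rangle$ is the smallest subset of $L$ containing $a_1,\dots,a_m$ and closed under the bracket, i.e. the set of the $a_i$ and all iterated commutators in them. *)

From HB Require Import structures.
From mathcomp Require Import all_boot all_order all_algebra.
Set Implicit Arguments. Unset Strict Implicit. Unset Printing Implicit Defensive.
Import GRing.Theory.
Local Open Scope ring_scope.

Definition is_lie_bracket (F : fieldType) (L : lmodType F) (br : L -> L -> L) : Prop :=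
  [/\ (forall (c : F) (x y z : L), br (c *: x + y) z = c *: br x z + br y z),
      (forall (c : F) (x y z : L), br x (c *: y + z) = c *: br x y + br x z),
      (forall x : L, br x x = 0)
    & (forall x y z : L, br x (br y z) + br y (br z x) + br z (br x y) = 0)].

Inductive lie_gen (F : fieldType) (L : lmodType F) (br : L -> L -> L) (s : seq L)
  : L -> Prop :=
  | lg_gen x : x \in s -> lie_gen br s x
  | lg_zero : lie_gen br s 0
  | lg_add x y : lie_gen br s x -> lie_gen br s y -> lie_gen br s (x + y)
  | lg_scale (c : F) x : lie_gen br s x -> lie_gen br s (c *: x)
  | lg_br x y : lie_gen br s x -> lie_gen br s y -> lie_gen br s (br x y).

Inductive lie_set (F : fieldType) (L : lmodType F) (br : L -> L -> L) (s : seq L)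
  : L -> Prop :=
  | ls_gen x : x \in s -> lie_set br s x
  | ls_br x y : lie_set br s x -> lie_set br s y -> lie_set br s (br x y).

Definition ad_nilpotent (F : fieldType) (L : lmodType F) (br : L -> L -> L) (a : L) : Prop :=
  exists n : nat, forall x : L, iter n (fun y => br y a) x = 0.

Definition lie_ideal (F : fieldType) (L : lmodType F) (br : L -> L -> L) (I : L -> Prop) : Prop :=
  [/\ I 0,
      (forall x y, I x -> I y -> I (x + y)),
      (forall (c : F) x, I x -> I (c *: x))
    & (forall x y, I y -> I (br x y))].

(* Finite codimension: L/I is finite dimensional, i.e. L = span(vs) + I
   for some finite family vs. *)
Definition finite_codim (F : fieldType) (L : lmodType F) (I : L -> Prop) : Prop :=
  exists vs : seq L, forall x : L,
    exists (c : nat -> F) (y : L), I y /\ x = \sum_(i < size vs) c i *: vs`_i + y.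

Definition lie_fin_gen (F : fieldType) (L : lmodType F) (br : L -> L -> L) (I : L -> Prop) : Prop :=
  exists s : seq L, forall x : L, I x <-> lie_gen br s x.

From mathcomp Require Import all_boot all_order all_algebra.
From Stdlib Require Import Classical.
Set Implicit Arguments. Unset Strict Implicit. Unset Printing Implicit Defensive.
Import GRing.Theory.
Local Open Scope ring_scope.

(* Since L is generated by S = S<a>, it is spanned by S, so finitely many
   elements B of S span L modulo I; they are ad-nilpotent of a common index N.
   Choose a finite T in I such that the generators a and the brackets [p, q]
   (p, q in B) lie in span B + T, and such that span T contains the
   intersection of span B with I.  Then I is generated by the elements
   [t, b1, ..., bk] with t in T, bi in B and k <= |B| N: modulo shorter words
   the order of the letters bi is irrelevant, and a longer word repeats some
   letter N times.  The subalgebra M they generate is stable under ad B, hence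
   L = span B + M, and I = M follows. *)
Section Sequences.
Variable T : eqType.
Implicit Types (B s u v : seq T) (p q : T).

Lemma fin_choice (S : eqType) (Q : S -> Prop) (R : T -> S -> Prop) s :
  (forall x, exists2 y, Q y & R x y) ->
  exists2 E : seq S, {in E, forall y, Q y} & {in s, forall x, exists2 y, y \in E & R x y}.
Proof.
move=> hQR; elim: s => [|x s [E hE hs]]; first by exists [::].
have [y hy hxy] := hQR x.
exists (y :: E) => [z|z]; first by rewrite inE => /predU1P [-> //|/hE].
rewrite inE => /predU1P [->|/hs [y' hy' hzy']]; first by exists y; rewrite ?mem_head.
by exists y'; rewrite // inE hy' orbT.
Qed.

Lemma count_mem_le B s N :
  {in B, forall p, count_mem p s <= N}%N -> (count (mem B) s <= size B * N)%N.
Proof.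
elim: B => [|b B IH] hB /=; first by rewrite count_pred0.
rewrite (eq_count (a2 := predU (pred1 b) (mem B))) => [|z]; last by rewrite inE.
rewrite mulSn -(leq_add2r (count (predI (pred1 b) (mem B)) s)) count_predUI.
rewrite -addnA leq_add ?hB ?inE ?eqxx // (leq_trans _ (leq_addr _ _)) //.
by apply: IH => p hp; apply: hB; rewrite inE hp orbT.
Qed.

Lemma pigeonhole_count B s N :
  all (mem B) s -> (size B * N < size s)%N -> exists2 p, p \in B & (N < count_mem p s)%N.
Proof.
rewrite all_count => /eqP <- hlt.
apply/hasP; move: hlt; apply: contraLR => /hasPn hB.
by rewrite -leqNgt; apply: count_mem_le => p /hB; rewrite -leqNgt.
Qed.

Fixpoint words B n : seq (seq T) :=
  if n is n'.+1 then [::] :: [seq x :: s | x <- B, s <- words B n'] else [:: [::]].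

Lemma mem_words B n s : all (mem B) s -> (size s <= n)%N -> s \in words B n.
Proof.
elim: n s => [|n IH] [|x s] //= /andP [hx hs] hsz.
by rewrite inE; apply/orP; right; apply/allpairsP; exists (x, s); rewrite /= hx IH.
Qed.

Lemma words_all B n s : s \in words B n -> all (mem B) s.
Proof.
elim: n s => [|n IH] s /=; first by rewrite inE => /eqP ->.
by rewrite inE => /predU1P [-> //|/allpairsP [[x s'] [/= hx /IH hs ->]]]; rewrite /= hx.
Qed.

Lemma filter_pred1 s p : filter (pred1 p) s = nseq (count_mem p s) p.
Proof. by elim: s => //= x s ->; case: eqP => [->|]. Qed.

Lemma perm_nseq_count s p N :
  (N <= count_mem p s)%N -> exists rest, perm_eq s (nseq N p ++ rest).
Proof.
move=> hN; exists (nseq (count_mem p s - N) p ++ filter (predC1 p) s).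
by rewrite catA -nseqD subnKC // -filter_pred1 perm_sym perm_filterC.
Qed.

Section PermutationInvariance.
Variables (V : zmodType) (M : V -> Prop) (f : seq T -> V) (s : seq T).
Hypotheses (M0 : M 0) (MD : forall x y, M x -> M y -> M (x + y)).
Hypothesis swapM : forall s1 p q s2, perm_eq (s1 ++ p :: q :: s2) s ->
  M (f (s1 ++ p :: q :: s2) - f (s1 ++ q :: p :: s2)).

Let M_trans x y z : M (x - y) -> M (y - z) -> M (x - z).
Proof. by move=> hxy hyz; have := MD hxy hyz; rewrite addrA subrK. Qed.

Lemma perm_mod_move s0 x u v : perm_eq (s0 ++ x :: u ++ v) s ->
  M (f (s0 ++ x :: u ++ v) - f (s0 ++ u ++ x :: v)).
Proof.
elim: u s0 => [|y u IH] s0 hs; first by rewrite subrr.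
apply: M_trans (swapM hs) _.
have := IH (rcons s0 y); rewrite -cats1 -!catA; apply.
by apply: perm_trans hs; rewrite perm_cat2l -[x :: _]cat1s perm_catCA.
Qed.

Lemma perm_mod_swap u : perm_eq s u -> M (f s - f u).
Proof.
suff: forall s0 u v, perm_eq (s0 ++ u) s -> perm_eq u v -> M (f (s0 ++ u) - f (s0 ++ v)).
  by move=> h hsu; apply: (h [::]).
move=> s0 {}u; elim: u s0 => [|x u IH] s0 v hs huv.
  by move: huv; rewrite perm_sym => /perm_nilP ->; rewrite subrr.
have hx : x \in v by rewrite -(perm_mem huv) mem_head.
case/splitPr: hx huv => v1 v2; rewrite perm_sym -[x :: v2]cat1s perm_catCA perm_cons perm_sym => huv.
have hs' : perm_eq (s0 ++ x :: v1 ++ v2) s.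
  by rewrite (perm_trans _ hs) // perm_cat2l perm_cons perm_sym.
apply: M_trans (perm_mod_move hs').
by have := IH (rcons s0 x) _ _ huv; rewrite -cats1 -!catA; apply.
Qed.

End PermutationInvariance.
End Sequences.

Section LinearSpan.
Variables (F : fieldType) (L : lmodType F).
Implicit Types (B E : seq L) (P R Q : L -> Prop).

Definition subspace R :=
  [/\ R 0, forall x y, R x -> R y -> R (x + y) & forall (c : F) x, R x -> R (c *: x)].

Inductive lin_span B : L -> Prop :=
  | span_mem x : x \in B -> lin_span B x
  | span0 : lin_span B 0
  | spanD x y : lin_span B x -> lin_span B y -> lin_span B (x + y)
  | spanZ (c : F) x : lin_span B x -> lin_span B (c *: x).

Definition span_plus B Q x := exists2 y, Q y & lin_span B (x - y).

Lemma subspace_lin_span B : subspace (lin_span B).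
Proof. by split; [apply: span0 | apply: spanD | apply: spanZ]. Qed.

Lemma lin_span_sub R B : subspace R -> {in B, forall x, R x} -> forall x, lin_span B x -> R x.
Proof. by case=> R0 RD RZ hB x; elim=> [y /hB //|||] *; [apply: R0|apply: RD|apply: RZ]. Qed.

Lemma lin_span_subset B1 B2 : {subset B1 <= B2} -> forall x, lin_span B1 x -> lin_span B2 x.
Proof. by move=> sB; apply: lin_span_sub (subspace_lin_span B2) _ => x /sB /span_mem. Qed.

Lemma subspace_sum R (vs : seq L) (c : nat -> F) :
  subspace R -> {in vs, forall v, R v} -> R (\sum_(i < size vs) c i *: vs`_i).
Proof.
case=> R0 RD RZ hvs; apply: big_ind => // i _.
by apply/RZ/hvs/mem_nth.
Qed.

Lemma subspace_span_plus B Q : subspace Q -> subspace (span_plus B Q).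
Proof.
case=> Q0 QD QZ; split.
- by exists 0; rewrite // subrr; apply: span0.
- move=> x1 x2 [y1 hy1 hx1] [y2 hy2 hx2]; exists (y1 + y2); first exact: QD.
  by rewrite opprD addrACA; apply: spanD.
- by move=> c x [y hy hx]; exists (c *: y); rewrite -?scalerBr; [apply: QZ | apply: spanZ].
Qed.

Lemma span_plus_mem B Q x : Q x -> span_plus B Q x.
Proof. by exists x; rewrite // subrr; apply: span0. Qed.

Lemma span_plus_sub B Q1 Q2 : (forall y, Q1 y -> Q2 y) ->
  forall x, span_plus B Q1 x -> span_plus B Q2 x.
Proof. by move=> hQ x [y /hQ]; exists y. Qed.

Lemma lin_span_seq P (vs : seq L) :
  {in vs, forall v, exists2 B, {in B, forall b, P b} & lin_span B v} ->
  exists2 B, {in B, forall b, P b} & {in vs, forall v, lin_span B v}.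
Proof.
elim: vs => [|v vs IH] hvs; first by exists [::].
have [B1 hB1 hv] := hvs v (mem_head _ _).
have [B2 hB2 hvs'] : exists2 B, {in B, forall b, P b} & {in vs, forall v, lin_span B v}.
  by apply: IH => w hw; apply: hvs; rewrite inE hw orbT.
exists (B1 ++ B2) => [b|w]; first by rewrite mem_cat => /orP [/hB1|/hB2].
rewrite inE => /predU1P [->|/hvs' hw].
  by apply: (lin_span_subset _ hv) => z hz; rewrite mem_cat hz.
by apply: (lin_span_subset _ hw) => z hz; rewrite mem_cat hz orbT.
Qed.

Lemma lin_span_cons b B w :
  lin_span (b :: B) w -> exists c w', lin_span B w' /\ w = c *: b + w'.
Proof.
elim=> [x||x y _ [c1 [w1 [h1 ->]]] _ [c2 [w2 [h2 ->]]]|c x _ [c1 [w1 [h1 ->]]]].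
- rewrite inE => /predU1P [->|hx].
    by exists 1, 0; split; [apply: span0 | rewrite scale1r addr0].
  by exists 0, x; split; [apply: span_mem | rewrite scale0r add0r].
- by exists 0, 0; split; [apply: span0 | rewrite scale0r addr0].
- by exists (c1 + c2), (w1 + w2); split; [apply: spanD | rewrite scalerDl addrACA].
- by exists (c * c1), (c *: w1); split; [apply: spanZ | rewrite scalerDr scalerA].
Qed.

(* Either some [b + z], [z] in the span of the tail, lies in [R] and is added
   to [E], or [b] does not contribute to the intersection (a classical case
   split). *)
Lemma lin_span_cap R B : subspace R ->
  exists2 E, {in E, forall e, R e} & forall w, lin_span B w -> R w -> lin_span E w.
Proof.
case=> R0 RD RZ; elim: B => [|b B [E hE IH]].
  by exists [::] => // w.
have [[z [hz hbz]]|hno] := classic (exists z, lin_span B z /\ R (b + z)).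
  exists (b + z :: E) => [e|w /lin_span_cons [c [w' [hw' ->]]] hw].
    by rewrite inE => /predU1P [->|/hE].
  have -> : c *: b + w' = c *: (b + z) + (w' - c *: z).
    by rewrite scalerDr addrACA subrr addr0.
  apply: spanD; first by apply/spanZ/span_mem/mem_head.
  apply: lin_span_subset (IH _ _ _) => [y||]; first by rewrite inE => ->; rewrite orbT.
  - by apply: spanD => //; rewrite -scaleNr; apply: spanZ.
  - have := RD _ _ hw (RZ (- c) _ hbz).
    by rewrite scaleNr scalerDr opprD addrACA subrr add0r.
exists E => // w /lin_span_cons [c [w' [hw' ->]]] hw.
have [c0 | hc] := eqVneq c 0; first by move: hw; rewrite c0 scale0r !add0r; apply: IH.
case: hno; exists (c^-1 *: w'); split; first exact: spanZ.
by rewrite -[b](scalerK hc) -scalerDr; apply: RZ.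
Qed.

End LinearSpan.

Section LieAlgebra.
Variables (F : fieldType) (L : lmodType F) (br : L -> L -> L).
Hypothesis hb : is_lie_bracket br.
Implicit Types (a B G T : seq L) (R : L -> Prop).

Lemma brDl x y z : br (x + y) z = br x z + br y z.
Proof. by case: hb => brl _ _ _; have := brl 1 x y z; rewrite !scale1r. Qed.

Lemma brDr x y z : br x (y + z) = br x y + br x z.
Proof. by case: hb => _ brr _ _; have := brr 1 x y z; rewrite !scale1r. Qed.

Lemma br0l z : br 0 z = 0.
Proof. by apply: (addIr (br 0 z)); rewrite -brDl !add0r. Qed.

Lemma br0r z : br z 0 = 0.
Proof. by apply: (addIr (br z 0)); rewrite -brDr !add0r. Qed.

Lemma brZl c x z : br (c *: x) z = c *: br x z.
Proof. by case: hb => brl _ _ _; rewrite -[c *: x]addr0 brl br0l addr0. Qed.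

Lemma brZr c x z : br x (c *: z) = c *: br x z.
Proof. by case: hb => _ brr _ _; rewrite -[c *: z]addr0 brr br0r addr0. Qed.

Lemma brNr x z : br x (- z) = - br x z.
Proof. by rewrite -scaleN1r brZr scaleN1r. Qed.

Lemma brC x y : br y x = - br x y.
Proof.
case: hb => _ _ brxx _; apply/eqP; rewrite -addr_eq0.
by have := brxx (x + y); rewrite brDl !brDr !brxx add0r addr0 addrC => ->.
Qed.

Lemma brJ x y z : br (br x y) z = br (br x z) y + br x (br y z).
Proof.
case: hb => _ _ _ /(_ x y z) /eqP; rewrite addrC addr_eq0 => /eqP jac.
by rewrite brC jac opprK [br (br x z) y]brC [br x z]brC brNr opprK addrC.
Qed.

Lemma subspace_lie_gen a : subspace (lie_gen br a).
Proof. by split; [apply: lg_zero | apply: lg_add | apply: lg_scale]. Qed.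

Lemma lie_gen_sub R a : subspace R -> (forall x y, R x -> R y -> R (br x y)) ->
  {in a, forall x, R x} -> forall x, lie_gen br a x -> R x.
Proof.
by case=> R0 RD RZ RB ha x; elim=> [y /ha //||||] *; [apply: R0|apply: RD|apply: RZ|apply: RB].
Qed.

Lemma br_lin_span_ind R B1 B2 : subspace R ->
  {in B1 & B2, forall x y, R (br x y)} ->
  forall u v, lin_span B1 u -> lin_span B2 v -> R (br u v).
Proof.
case=> R0 RD RZ hR u v hu hv; elim: hu => [x hx||*|*]; rewrite ?br0l ?brDl ?brZl //.
- by elim: hv => [*||*|*]; rewrite ?br0r ?brDr ?brZr //; [apply: hR | apply: RD | apply: RZ].
- exact: RD.
- exact: RZ.
Qed.

Lemma lie_gen_lin_span_lie_set a x : lie_gen br a x ->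
  exists2 B, {in B, forall b, lie_set br a b} & lin_span B x.
Proof.
pose R x := exists2 B, {in B, forall b, lie_set br a b} & lin_span B x.
have subR B1 B2 : {in B1, forall b, lie_set br a b} -> {in B2, forall b, lie_set br a b} ->
    {in B1 ++ B2, forall b, lie_set br a b}.
  by move=> h1 h2 b; rewrite mem_cat => /orP [/h1|/h2].
move=> hx; apply: (lie_gen_sub (R := R)) hx => [|u v [B1 h1 hu] [B2 h2 hv]|y hy].
- split; first by exists [::] => //; apply: span0.
  + move=> u v [B1 h1 hu] [B2 h2 hv]; exists (B1 ++ B2); first exact: subR.
    apply: spanD; [apply: (lin_span_subset _ hu) | apply: (lin_span_subset _ hv)];
      by move=> z hz; rewrite mem_cat hz ?orbT.
  + by move=> c u [B hB hu]; exists B => //; apply: spanZ.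
- exists [seq br u v | u <- B1, v <- B2].
    by move=> _ /allpairsP [[x1 y1] [/= /h1 hx1 /h2 hy1 ->]]; apply: ls_br.
  apply: br_lin_span_ind hu hv => [|u' v' hu' hv']; first exact: subspace_lin_span.
  by apply: span_mem; apply/allpairsP; exists (u', v').
- exists [:: y] => [b|]; last exact/span_mem/mem_head.
  by rewrite inE => /eqP ->; apply: ls_gen.
Qed.

Lemma uniform_ad_nilpotent B : {in B, forall b, ad_nilpotent br b} ->
  exists N, {in B, forall b x, iter N (fun y => br y b) x = 0}.
Proof.
elim: B => [|b B IH] hB; first by exists 0%N.
have [n hn] := hB b (mem_head _ _).
have [N hN] : exists N, {in B, forall b x, iter N (fun y => br y b) x = 0}.
  by apply: IH => b' hb'; apply: hB; rewrite inE hb' orbT.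
exists (N + n)%N => b'; rewrite inE => /predU1P [-> | /hN hb'] x.
  by rewrite iterD hn iter_fix // br0l.
by rewrite addnC iterD hb' iter_fix // br0l.
Qed.

Definition ad_seq x (s : seq L) := foldl br x s.

Lemma ad_seq_cons x b s : ad_seq x (b :: s) = ad_seq (br x b) s.
Proof. by []. Qed.

Lemma ad_seq_cat x s1 s2 : ad_seq x (s1 ++ s2) = ad_seq (ad_seq x s1) s2.
Proof. exact: foldl_cat. Qed.

Lemma ad_seq_rcons x s b : ad_seq x (rcons s b) = br (ad_seq x s) b.
Proof. exact: foldl_rcons. Qed.

Lemma ad_seq_nseq x b n : ad_seq x (nseq n b) = iter n (fun y => br y b) x.
Proof. by elim: n x => // n IH x; rewrite ad_seq_cons IH iterSr. Qed.

Lemma ad_seqD x y s : ad_seq (x + y) s = ad_seq x s + ad_seq y s.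
Proof. by elim: s x y => // b s IH x y; rewrite !ad_seq_cons brDl IH. Qed.

Lemma ad_seqZ c x s : ad_seq (c *: x) s = c *: ad_seq x s.
Proof. by elim: s x => // b s IH x; rewrite !ad_seq_cons brZl IH. Qed.

Lemma ad_seq0 s : ad_seq 0 s = 0.
Proof. by elim: s => // b s IH; rewrite ad_seq_cons br0l. Qed.

Lemma ad_seqB x y s : ad_seq (x - y) s = ad_seq x s - ad_seq y s.
Proof. by rewrite ad_seqD -scaleN1r ad_seqZ scaleN1r. Qed.

Lemma lie_ideal_subspace I : lie_ideal br I -> subspace I.
Proof. by case. Qed.

Lemma lie_ideal_ad_seq I y s : lie_ideal br I -> I y -> I (ad_seq y s).
Proof.
case=> _ _ IZ IB; elim: s y => // b s IH y hy; rewrite ad_seq_cons; apply: IH.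
by rewrite brC -scaleN1r; apply/IZ/IB.
Qed.

Lemma lie_gen_brr G b : {in G, forall g, lie_gen br G (br g b)} ->
  forall m, lie_gen br G m -> lie_gen br G (br m b).
Proof.
move=> hG m; elim=> [g /hG //||||x y hx IHx hy IHy] *; rewrite ?br0l ?brDl ?brZl.
- exact: lg_zero.
- exact: lg_add.
- exact: lg_scale.
- by rewrite brJ; apply: lg_add; apply: lg_br.
Qed.

(* Leibniz rule: [[u, v], s] is a sum of brackets [[u, s1], [v, s2]] with
   s1, s2 complementary subsequences of s. *)
Lemma ad_seq_br_lie_gen G u v s :
  (forall s', subseq s' s -> lie_gen br G (ad_seq u s')) ->
  (forall s', subseq s' s -> lie_gen br G (ad_seq v s')) ->
  lie_gen br G (ad_seq (br u v) s).
Proof.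
elim: s u v => [|b s IH] u v hu hv; first by apply: lg_br; [apply: (hu [::]) | apply: (hv [::])].
have sub_cons s' : subseq s' s -> subseq s' (b :: s).
  by move=> hs'; apply: subseq_trans hs' (subseq_cons _ _).
rewrite ad_seq_cons brJ ad_seqD; apply: lg_add; apply: IH => s' hs'.
- by apply: (hu (b :: s')); rewrite /= eqxx.
- exact/hv/sub_cons.
- exact/hu/sub_cons.
- by apply: (hv (b :: s')); rewrite /= eqxx.
Qed.

Section FiniteGeneration.
Variables (B T : seq L) (N : nat).
Hypothesis pairB : {in B &, forall p q, span_plus B (fun y => y \in T) (br p q)}.
Hypothesis nilB : {in B, forall b x, iter N (fun y => br y b) x = 0}.

Let G := [seq ad_seq t s | t <- T, s <- words B (size B * N)].

(* Modulo shorter words, [t, s] is symmetric in the letters of [s]: swapping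
   two adjacent letters [p q] costs [[t, s0], [p, q], s2], and [[p, q]] is a
   combination of letters plus an element of [T]. *)
Let ad_seq_swap t s0 p q s2 : t \in T -> all (mem B) (s0 ++ p :: q :: s2) ->
  (forall t' s, t' \in T -> all (mem B) s -> (size s < size (s0 ++ p :: q :: s2))%N ->
     lie_gen br G (ad_seq t' s)) ->
  lie_gen br G (ad_seq t (s0 ++ p :: q :: s2) - ad_seq t (s0 ++ q :: p :: s2)).
Proof.
move=> ht; rewrite all_cat /= => /and4P [hs0 hp hq hs2] IH.
have shorter s : (size s < (size s2).+2)%N -> (size (s0 ++ s) < size (s0 ++ p :: q :: s2))%N.
  by rewrite !size_cat ltn_add2l.
rewrite !ad_seq_cat !ad_seq_cons -ad_seqB brJ addrAC subrr add0r.
have [y hy hw] := pairB hp hq.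
have subB s : subseq s s2 -> all (mem B) s.
  by move=> /mem_subseq hs; apply/allP => z /hs; apply: (allP hs2).
rewrite -(subrK y (br p q)) brDr ad_seqD; apply: lg_add.
  elim: hw => [r hr||w1 w2 _ IH1 _ IH2|c w _ IHw];
    rewrite ?br0r ?brDr ?brZr ?ad_seq0 ?ad_seqD ?ad_seqZ.
  - rewrite -ad_seq_cons -ad_seq_cat; apply: IH => //; last exact: shorter.
    by rewrite all_cat hs0 /= hr.
  - exact: lg_zero.
  - exact: lg_add.
  - exact: lg_scale.
apply: ad_seq_br_lie_gen => s hs.
- rewrite -ad_seq_cat; apply: IH; rewrite ?all_cat ?hs0 ?subB //.
  by rewrite shorter // ltnS leqW // size_subseq.
- apply: IH; rewrite ?subB //.
  by rewrite size_cat /= (leq_ltn_trans (size_subseq hs)) // ltn_addl // ltnS leqW.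
Qed.

(* Long words contain some letter [p] at least [N] times; permuting it to
   the front kills the word, since [ad p] is nilpotent of index [N]. *)
Lemma ad_seq_lie_gen t s : t \in T -> all (mem B) s -> lie_gen br G (ad_seq t s).
Proof.
have [n] := ubnP (size s); elim: n => // n IH in t s *; rewrite ltnS => hsn ht hs.
have [short | long] := leqP (size s) (size B * N).
  by apply: lg_gen; apply/allpairsP; exists (t, s); rewrite mem_words.
have [p hp /ltnW /perm_nseq_count [rest hrest]] := pigeonhole_count hs long.
have := perm_mod_swap (f := ad_seq t) (lg_zero br G) (@lg_add _ _ br G) _ hrest.
rewrite ad_seq_cat ad_seq_nseq nilB // ad_seq0 subr0; apply => s1 p' q s2 hperm.
apply: ad_seq_swap => // [|t' s' ht' hs' hlt]; first by rewrite (perm_all _ hperm).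
by apply: IH => //; rewrite (leq_trans hlt) // (perm_size hperm).
Qed.

Lemma lie_gen_brr_span w m : lin_span B w -> lie_gen br G m -> lie_gen br G (br m w).
Proof.
move=> hw hm; elim: hw => [b hbB||*|*]; rewrite ?br0r ?brDr ?brZr.
- apply: lie_gen_brr hm => _ /allpairsP [[t s] [/= ht /words_all hs ->]].
  by rewrite -ad_seq_rcons; apply: ad_seq_lie_gen; rewrite // -cats1 all_cat hs /= hbB.
- exact: lg_zero.
- exact: lg_add.
- exact: lg_scale.
Qed.

Lemma lie_gen_mem_T t : t \in T -> lie_gen br G t.
Proof. by move=> ht; apply: (ad_seq_lie_gen (s := [::])). Qed.

Lemma span_plus_lie_gen_br x y :
  span_plus B (lie_gen br G) x -> span_plus B (lie_gen br G) y ->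
  span_plus B (lie_gen br G) (br x y).
Proof.
have sub := subspace_span_plus B (subspace_lie_gen G); have [_ subD _] := sub.
move=> [m1 hm1 hw1] [m2 hm2 hw2].
rewrite -(subrK m1 x) -(subrK m2 y); move: (x - m1) (y - m2) hw1 hw2 => w1 w2 hw1 hw2.
rewrite brDl !brDr -addrA; apply: subD.
  apply: (br_lin_span_ind sub) hw1 hw2 => p q hp hq.
  by move: (pairB hp hq); apply: span_plus_sub => z /lie_gen_mem_T.
apply/span_plus_mem/lg_add; last by apply: lg_add; [apply: lie_gen_brr_span | apply: lg_br].
by rewrite brC -scaleN1r; apply/lg_scale/lie_gen_brr_span.
Qed.

Lemma lie_fin_gen_ideal a I : (forall x, lie_gen br a x) -> lie_ideal br I ->
  {in T, forall t, I t} -> {in a, forall x, span_plus B (fun y => y \in T) x} ->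
  (forall w, lin_span B w -> I w -> lin_span T w) -> lie_fin_gen br I.
Proof.
move=> hgen hI TI ha capT; have [_ ID IZ IB] := hI.
have GI m : lie_gen br G m -> I m.
  apply: (lie_gen_sub (lie_ideal_subspace hI)) => [u v _ /IB // | g].
  by case/allpairsP=> [[t s] [/= /TI ht _ ->]]; apply: lie_ideal_ad_seq.
exists G => x; split => [hx|]; last exact: GI.
have [m hm hw] : span_plus B (lie_gen br G) x.
  apply: (lie_gen_sub (R := span_plus B (lie_gen br G))) (hgen x) => [||y /ha].
  - exact/subspace_span_plus/subspace_lie_gen.
  - exact: span_plus_lie_gen_br.
  - by apply: span_plus_sub => z /lie_gen_mem_T.
rewrite -(subrK m x); apply: lg_add => //.
apply: (lin_span_sub (subspace_lie_gen G)) (capT _ hw _) => [t /lie_gen_mem_T //|].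
by rewrite -scaleN1r; apply/ID/IZ/GI.
Qed.

End FiniteGeneration.

End LieAlgebra.

Theorem lemma3 (F : fieldType) (L : lmodType F) (br : L -> L -> L)
  (a : seq L) (I : L -> Prop) :
  is_lie_bracket br ->
  (forall x : L, lie_gen br a x) ->
  (forall x : L, lie_set br a x -> ad_nilpotent br x) ->
  lie_ideal br I ->
  finite_codim I ->
  lie_fin_gen br I.
Proof.
move=> hb hgen hnil hI [vs hvs].
have [B hBS hvsB] : exists2 B, {in B, forall b, lie_set br a b} & {in vs, forall v, lin_span B v}.
  by apply: lin_span_seq => v _; apply: lie_gen_lin_span_lie_set.
have [N hN] := uniform_ad_nilpotent hb (fun b hbB => hnil b (hBS b hbB)).
have spanBI x : span_plus B I x.
  have [c [y [hy ->]]] := hvs x; exists y; rewrite // addrK.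
  by apply: subspace_sum hvsB; apply: subspace_lin_span.
have [T0 T0I hT0] := fin_choice (R := fun x y => lin_span B (x - y))
  (a ++ [seq br p q | p <- B, q <- B]) spanBI.
have [E EI hE] := lin_span_cap B (lie_ideal_subspace hI).
have inT x : x \in a ++ [seq br p q | p <- B, q <- B] -> span_plus B (fun y => y \in T0 ++ E) x.
  by case/hT0=> y hy hxy; exists y; rewrite // mem_cat hy.
apply: (lie_fin_gen_ideal (T := T0 ++ E) hb _ hN hgen hI) => [p q hp hq|t|x hx|w hw hwI].
- by apply: inT; rewrite mem_cat; apply/orP; right; apply/allpairsP; exists (p, q).
- by rewrite mem_cat => /orP [/T0I | /EI].
- by apply: inT; rewrite mem_cat hx.
- by apply: (lin_span_subset _ (hE w hw hwI)) => z hz; rewrite mem_cat hz orbT.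
Qed.
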